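(* For $i=1,\dots,n$ let $X_i$ be a finite set with $|X_i|=m_i$, and let $P_i$ be an irreducible stochastic matrix on $X_i$ in detailed balance with a strictly positive probability measure $\sigma_i$. Let $\{1,\dots,n\}=C\sqcup N$ be a partition with $N\ne\emptyset$, $i_1=\min N$, let $p^0_1,\dots,p^0_n>0$ sum to $1$, and assume $P_k$ is symmetric for every $k>i_1$. Let $P$ be the first crested product (see context), acting on $L(X_1\times\cdots\times X_n)\cong L(X_1)\otimes\cdots\otimes L(X_n)$. For each $i$ let $L(X_i)=\bigoplus_{j=0}^{r_i}V^i_j$ be the decomposition into eigenspaces of $P_i$, where $V^i_j$ has eigenvalue $\lambda^i_j$, $\lambda^i_0=1$ and $V^i_0$ is the space of constant functions. Then: (a) for each $k\in\{i_1+1,\dots,n\}$, each $j_k\in\{1,\dots,r_k\}$ and each choice of $j_i\in\{0,\dots,r_i\}$ for $i\in C$, $i<k$, every function in $$W^1\otimes\cdots\otimes W^{k-1}\otimes V^k_{j_k}\otimes V^{k+1}_0\otimes\cdots\otimes V^n_0,\qquad W^i=\begin{cases}L(X_i),& i\in N,\\ V^i_{j_i},& i\in C,\end{cases}$$ is an eigenvector of $P$ with eigenvalue $\sum_{i\in C,\,i<k}p^0_i\lambda^i_{j_i}+p^0_k\lambda^k_{j_k}+\sum_{i>k}p^0_i$; (b) for each choice of $j_t\in\{0,\dots,r_t\}$, $t=1,\dots,i_1$, every function in $V^1_{j_1}\otimes\cdots\otimes V^{i_1}_{j_{i_1}}\otimes V^{i_1+1}_0\otimes\cdots\otimes V^n_0$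 is an eigenvector of $P$ with eigenvalue $\sum_{i=1}^{i_1}p^0_i\lambda^i_{j_i}+\sum_{i=i_1+1}^np^0_i$; and $L(X_1\times\cdots\times X_n)$ is the direct sum of all the subspaces listed in (a) and (b).
   Context: The first crested product is the stochastic matrix $$P=\sum_{i\in C}p^0_i\,(I_1\otimes\cdots\otimes I_{i-1}\otimes P_i\otimes I_{i+1}\otimes\cdots\otimes I_n)+\sum_{i\in N}p^0_i\,(I_1\otimes\cdots\otimes I_{i-1}\otimes P_i\otimes J_{i+1}\otimes\cdots\otimes J_n),$$ where $I_i$ is the identity on $X_i$ and $J_i$ the $m_i\times m_i$ matrix with all entries $1/m_i$; i.e. $p(x,y)=\sum_{i\in C}p^0_i(\prod_{j\ne i}\delta(x_j,y_j))p_i(x_i,y_i)+\sum_{i\in N}p^0_i(\prod_{j<i}\delta(x_j,y_j))p_i(x_i,y_i)/\prod_{j>i}m_j$. It acts on functions by $(Pf)(x)=\sum_y p(x,y)f(y)$. $L(Z)$ denotes the space of complex functions on $Z$, and $(f_1\otimes\cdots\otimes f_n)(x_1,\dots,x_n)=f_1(x_1)\cdots f_n(x_n)$. Detailed balance: $\sigma_i(x)p_i(x,y)=\sigma_i(y)p_i(y,x)$. *)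

(* Scalars: an arbitrary numClosedFieldType C (e.g. algC or
   complex R); "0 <= x" in C forces x to be real nonnegative. *)
From HB Require Import structures.
From mathcomp Require Import all_boot all_order all_algebra.
Set Implicit Arguments. Unset Strict Implicit. Unset Printing Implicit Defensive.
Import Order.TTheory GRing.Theory Num.Theory.
Local Open Scope ring_scope.

Section CrestedDefs.
Variable C : numClosedFieldType.

Definition stochastic (m : nat) (P : 'M[C]_m) : Prop :=
  (forall x y, 0 <= P x y) /\ (forall x, \sum_y P x y = 1).

Definition irreducible (m : nat) (P : 'M[C]_m) : Prop :=
  forall x y : 'I_m, exists k : nat, 0 < (P ^+ k) x y.

Definition strictly_positive_prob (m : nat) (s : 'I_m -> C) : Prop :=
  (forall x, 0 < s x) /\ \sum_x s x = 1.

Definition detailed_balance (m : nat) (P : 'M[C]_m) (s : 'I_m -> C) : Prop :=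
  forall x y, s x * P x y = s y * P y x.

Definition mx_act (m : nat) (P : 'M[C]_m) (f : {ffun 'I_m -> C}) : {ffun 'I_m -> C} :=
  [ffun x => \sum_y P x y * f y].

Definition fscale (T : finType) (mu : C) (f : {ffun T -> C}) : {ffun T -> C} :=
  [ffun x => mu * f x].

Definition is_eigenvalue (m : nat) (P : 'M[C]_m) (mu : C) : Prop :=
  exists f : {ffun 'I_m -> C}, f != 0 /\ mx_act P f = fscale mu f.

Definition eigsp (m : nat) (P : 'M[C]_m) (mu : C) : {ffun 'I_m -> C} -> Prop :=
  fun f => mx_act P f = fscale mu f.

Variables (n : nat) (m : 'I_n -> nat).

Definition prodT := {dffun forall i : 'I_n, 'I_(m i)}.

(* first crested product kernel p(x,y); C-part indexed by inC, N = complement *)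
Definition crested (inC : pred 'I_n) (p0 : 'I_n -> C)
    (P : forall i : 'I_n, 'M[C]_(m i)) (x y : prodT) : C :=
  \sum_(i : 'I_n | inC i) p0 i * (\prod_(j : 'I_n | j != i) ((x j == y j)%:R : C)) * P i (x i) (y i)
  + \sum_(i | ~~ inC i) p0 i * (\prod_(j : 'I_n | (j < i)%N) ((x j == y j)%:R : C))
                        * P i (x i) (y i) / (\prod_(j : 'I_n | (i < j)%N) ((m j)%:R : C)).

Definition crested_act (inC : pred 'I_n) (p0 : 'I_n -> C)
    (P : forall i : 'I_n, 'M[C]_(m i)) (f : {ffun prodT -> C}) : {ffun prodT -> C} :=
  [ffun x : prodT => \sum_(y : prodT) crested inC p0 P x y * f y].

Definition tensor (g : forall i : 'I_n, {ffun 'I_(m i) -> C}) : {ffun prodT -> C} :=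
  [ffun x : prodT => \prod_i g i (x i)].

(* W^1 (x) ... (x) W^n inside L(X_1 x ... x X_n): the span of the elementary
   tensors g_1 (x) ... (x) g_n with g_i in W^i (finite sums suffice since each
   W^i is a subspace, so scalars can be absorbed in a factor). *)
Definition tensp (W : forall i : 'I_n, {ffun 'I_(m i) -> C} -> Prop) :
    {ffun prodT -> C} -> Prop :=
  fun f => exists (k : nat) (g : 'I_k -> forall i : 'I_n, {ffun 'I_(m i) -> C}),
    (forall l i, W i (g l i)) /\ f = \sum_l tensor (g l).

End CrestedDefs.

Definition dirsum (V : zmodType) (I : finType) (Q : pred I) (S : I -> V -> Prop) : Prop :=
  (forall f : V, exists g : I -> V, (forall a, Q a -> S a (g a)) /\ f = \sum_(a | Q a) g a)
  /\ (forall g : I -> V, (forall a, Q a -> S a (g a)) ->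
        \sum_(a | Q a) g a = 0 -> forall a, Q a -> g a = 0).

Section Indices.
Variables (C : numClosedFieldType) (n : nat) (m : 'I_n -> nat) (r : 'I_n -> nat).
Variables (P : forall i : 'I_n, 'M[C]_(m i)) (lam : forall i : 'I_n, 'I_(r i).+1 -> C).
Variables (inC : pred 'I_n) (i1 : 'I_n) (p0 : 'I_n -> C).

Definition choiceT := {dffun forall i : 'I_n, 'I_(r i).+1}.

Definition Vsp (i : 'I_n) (j : 'I_(r i).+1) := eigsp (P i) (lam j).

Definition WA (k : 'I_n) (j : choiceT) (i : 'I_n) : {ffun 'I_(m i) -> C} -> Prop :=
  if (i < k)%N then (if inC i then Vsp (j i) else fun _ => True)
  else if i == k then Vsp (j i) else Vsp (ord0 : 'I_(r i).+1).

(* indices for (a): i1 < k, j_k <> 0, and only j_i (i in C, i < k) and j_k used *)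
Definition goodA (k : 'I_n) (j : choiceT) : bool :=
  [&& (i1 < k)%N, j k != ord0 &
      [forall i, (j i != ord0) ==> ((inC i && (i < k)%N) || (i == k))]].

Definition muA (k : 'I_n) (j : choiceT) : C :=
  \sum_(i : 'I_n | inC i && (i < k)%N) p0 i * lam (j i) + p0 k * lam (j k)
  + \sum_(i : 'I_n | (k < i)%N) p0 i.

Definition WB (j : choiceT) (i : 'I_n) : {ffun 'I_(m i) -> C} -> Prop :=
  if (i <= i1)%N then Vsp (j i) else Vsp (ord0 : 'I_(r i).+1).

Definition goodB (j : choiceT) : bool := [forall i, (j i != ord0) ==> (i <= i1)%N].

Definition muB (j : choiceT) : C :=
  \sum_(i : 'I_n | (i <= i1)%N) p0 i * lam (j i) + \sum_(i : 'I_n | (i1 < i)%N) p0 i.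

Definition goodAB (a : ('I_n * choiceT) + choiceT) : bool :=
  match a with inl kj => goodA kj.1 kj.2 | inr j => goodB j end.

Definition spAB (a : ('I_n * choiceT) + choiceT) : {ffun prodT m -> C} -> Prop :=
  match a with inl kj => tensp (WA kj.1 kj.2) | inr j => tensp (WB j) end.

End Indices.

(* Each [P_i] is self-adjoint for the inner product weighted by [sigma_i], so it is
   diagonalisable with orthogonal eigenspaces; its eigenvalue-1 eigenfunctions are
   constant (irreducibility), and for [k > i1] the symmetric [P_k] has column sums 1, so
   its other eigenfunctions have mean zero. On an elementary tensor [g_1 (x) ... (x) g_n]
   the [i]-th summand of [P] applies [P_i] to [g_i] and either keeps the other factors or,
   for [i] in [N], averages the factors after [i]. For factors taken from the listed
   eigenspaces these averages either reproduce a constant factor or vanish because a later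
   factor has mean zero, which yields the eigenvalues. Two listed subspaces differ at some
   coordinate where they lie in distinct eigenspaces of [P_i], so they are orthogonal for
   the product weight; and they span, because expanding every factor of a tensor of
   indicator functions along the eigenspaces gives tensors of eigenfunctions, each lying in
   one of the listed subspaces. *)

From HB Require Import structures.
From mathcomp Require Import all_boot all_order all_algebra.
From mathcomp Require Import sesquilinear spectral ring.
Set Implicit Arguments. Unset Strict Implicit. Unset Printing Implicit Defensive.
Import Order.TTheory GRing.Theory Num.Theory.
Local Open Scope ring_scope.

Section EigenSpace.
Variables (C : numClosedFieldType) (m : nat) (P : 'M[C]_m) (mu : C).

Lemma eigsp0 : eigsp P mu 0.
Proof. by apply/ffunP => x; rewrite !ffunE big1 ?mulr0 // => y _; rewrite ffunE mulr0. Qed.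

Lemma eigspD f g : eigsp P mu f -> eigsp P mu g -> eigsp P mu (f + g).
Proof.
move=> /ffunP Pf /ffunP Pg; apply/ffunP => x; move: (Pf x) (Pg x).
rewrite !ffunE mulrDr => <- <-; rewrite -big_split; apply: eq_bigr => y _.
by rewrite ffunE mulrDr.
Qed.

Lemma eigspZ c f : eigsp P mu f -> eigsp P mu (fscale c f).
Proof.
move=> /ffunP Pf; apply/ffunP => x; move: (Pf x); rewrite !ffunE => Pfx.
rewrite mulrCA -Pfx mulr_sumr; apply: eq_bigr => y _; rewrite ffunE; ring.
Qed.

Lemma eigsp_sum (I : finType) (Q : pred I) (F : I -> {ffun 'I_m -> C}) :
  (forall i, Q i -> eigsp P mu (F i)) -> eigsp P mu (\sum_(i | Q i) F i).
Proof. by apply: big_ind; [exact: eigsp0 | exact: eigspD]. Qed.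

End EigenSpace.

Lemma fscale_sum (C : numClosedFieldType) (T I : finType) (mu : C) (Q : pred I)
    (F : I -> {ffun T -> C}) :
  fscale mu (\sum_(l | Q l) F l) = \sum_(l | Q l) fscale mu (F l).
Proof.
apply/ffunP => x; rewrite ffunE !sum_ffunE mulr_sumr.
by apply: eq_bigr => l _; rewrite ffunE.
Qed.

Section WeightedDot.
Variables (C : numClosedFieldType) (T : finType) (w : T -> C).

Definition wdot (f g : {ffun T -> C}) : C := \sum_x w x * f x * (g x)^*.

Lemma wdotZl mu f g : wdot (fscale mu f) g = mu * wdot f g.
Proof. by rewrite /wdot mulr_sumr; apply: eq_bigr => x _; rewrite ffunE; ring. Qed.

Lemma wdotZr mu f g : wdot f (fscale mu g) = mu^* * wdot f g.
Proof.
by rewrite /wdot mulr_sumr; apply: eq_bigr => x _; rewrite ffunE rmorphM; ring.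
Qed.

Lemma wdot_suml (I : finType) (Q : pred I) (F : I -> {ffun T -> C}) g :
  wdot (\sum_(a | Q a) F a) g = \sum_(a | Q a) wdot (F a) g.
Proof.
rewrite /wdot exchange_big; apply: eq_bigr => x _.
by rewrite sum_ffunE mulr_sumr mulr_suml; apply: eq_bigr => a _; ring.
Qed.

Lemma wdot_sumr (I : finType) (Q : pred I) (F : I -> {ffun T -> C}) f :
  wdot f (\sum_(a | Q a) F a) = \sum_(a | Q a) wdot f (F a).
Proof.
rewrite /wdot exchange_big; apply: eq_bigr => x _.
by rewrite sum_ffunE rmorph_sum mulr_sumr; apply: eq_bigr => a _; ring.
Qed.

Lemma wdot_eq0 : (forall x, 0 < w x) -> forall f, wdot f f = 0 -> f = 0.
Proof.
move=> w_gt0 f /psumr_eq0P f0; apply/ffunP => x; rewrite ffunE.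
have /f0 /(_ x isT) : forall y, true -> 0 <= w y * f y * (f y)^*.
  by move=> y _; rewrite -mulrA mulr_ge0 ?mul_conjC_ge0 ?ltW.
by rewrite -mulrA => /eqP; rewrite mulf_eq0 mul_conjC_eq0 (gt_eqF (w_gt0 x)) => /eqP.
Qed.

End WeightedDot.

Lemma eigsp_sum_eq0 (C : numClosedFieldType) m (P : 'M[C]_m) mu f :
  (forall y, \sum_x P x y = 1) -> mu != 1 -> eigsp P mu f -> \sum_x f x = 0.
Proof.
move=> Pcol1 mu1 Pf.
have : \sum_x mx_act P f x = \sum_x f x.
  under eq_bigr do rewrite ffunE.
  by rewrite exchange_big; apply: eq_bigr => y _; rewrite -mulr_suml Pcol1 mul1r.
rewrite Pf; under eq_bigr do rewrite ffunE.
rewrite -mulr_sumr => /eqP; rewrite -subr_eq0 -{2}[\sum_x f x]mul1r -mulrBl.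
by rewrite mulf_eq0 subr_eq0 (negbTE mu1) => /eqP.
Qed.

Section Reversible.
Variables (C : numClosedFieldType) (m : nat) (P : 'M[C]_m) (s : 'I_m -> C).
Hypotheses (P_ge0 : forall x y, 0 <= P x y) (s_gt0 : forall x, 0 < s x)
  (Pdb : detailed_balance P s).

Lemma mx_act_selfadj f g : wdot s (mx_act P f) g = wdot s f (mx_act P g).
Proof.
rewrite /wdot.
transitivity (\sum_x \sum_y s x * P x y * f y * (g x)^*).
  apply: eq_bigr => x _; rewrite ffunE mulr_sumr mulr_suml.
  by apply: eq_bigr => y _; ring.
rewrite exchange_big; apply: eq_bigr => y _.
rewrite ffunE rmorph_sum mulr_sumr; apply: eq_bigr => x _.
by rewrite rmorphM /= (geC0_conj (P_ge0 y x)) Pdb; ring.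
Qed.

Lemma eigenvalue_real mu : is_eigenvalue P mu -> mu^* = mu.
Proof.
case=> h [h_neq0 Ph]; have := mx_act_selfadj h h.
rewrite Ph wdotZl wdotZr => /eqP; rewrite -subr_eq0 -mulrBl mulf_eq0 subr_eq0.
case/orP => [/eqP E | /eqP/(wdot_eq0 s_gt0) h0]; first by rewrite E conjCK.
by rewrite h0 eqxx in h_neq0.
Qed.

Lemma eigsp_orth mu nu f g : is_eigenvalue P nu -> mu != nu ->
  eigsp P mu f -> eigsp P nu g -> wdot s f g = 0.
Proof.
move=> /eigenvalue_real nu_real mu_nu Pf Pg; have := mx_act_selfadj f g.
rewrite Pf Pg wdotZl wdotZr nu_real => /eqP.
by rewrite -subr_eq0 -mulrBl mulf_eq0 subr_eq0 (negbTE mu_nu) => /eqP.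
Qed.

Section Harmonic.
Hypotheses (P_sum1 : forall x, \sum_y P x y = 1) (Pirr : irreducible P).
Variables (f : {ffun 'I_m -> C}) (Pf : mx_act P f = f).

Lemma harmonic_dirichlet_eq0 :
  \sum_x \sum_y s x * P x y * ((f x - f y) * (f x - f y)^*) = 0.
Proof.
pose E := \sum_x \sum_y s x * P x y * (f x * (f x - f y)^*).
have E0 : E = 0.
  apply: big1 => x _.
  have Pfx : \sum_y P x y * (f y)^* = (f x)^*.
    rewrite -{2}Pf ffunE rmorph_sum; apply: eq_bigr => y _.
    by rewrite rmorphM /= (geC0_conj (P_ge0 x y)).
  transitivity (s x * f x * ((f x)^* * \sum_y P x y - \sum_y P x y * (f y)^*)).
    rewrite mulrBr !mulr_sumr -sumrB; apply: eq_bigr => y _; rewrite rmorphB /=; ring.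
  by rewrite Pfx P_sum1 mulr1 subrr mulr0.
transitivity (E + \sum_x \sum_y s y * P y x * (f y * (f y - f x)^*)).
  rewrite /E -big_split; apply: eq_bigr => x _; rewrite -big_split; apply: eq_bigr => y _.
  by rewrite !rmorphB /= -Pdb; ring.
by rewrite [X in _ + X]exchange_big -/E E0 addr0.
Qed.

Lemma harmonic_edge x y : 0 < P x y -> f x = f y.
Proof.
move=> Pxy.
have ge0 x' y' : 0 <= s x' * P x' y' * ((f x' - f y') * (f x' - f y')^*).
  by rewrite mulr_ge0 ?mul_conjC_ge0 ?mulr_ge0 ?(ltW (s_gt0 _)).
have /psumr_eq0P/(_ x isT) := harmonic_dirichlet_eq0.
move=> /(_ (fun x' _ => sumr_ge0 _ (fun y' _ => ge0 x' y'))).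
move/psumr_eq0P => /(_ (fun y' _ => ge0 x y') y isT) /eqP.
by rewrite mulf_eq0 mul_conjC_eq0 mulf_eq0 (gt_eqF (s_gt0 x)) (gt_eqF Pxy) subr_eq0 => /eqP.
Qed.

Lemma harmonic_const x y : f x = f y.
Proof.
have Pk_ge0 k x' y' : 0 <= (P ^+ k) x' y'.
  elim: k x' y' => [|k IHk] x' y'; first by rewrite expr0 mxE ler0n.
  by rewrite exprS -mulmxE mxE sumr_ge0 // => z _; rewrite mulr_ge0.
have [k] := Pirr x y; elim: k x => [|k IHk] x.
  by rewrite expr0 mxE; case: eqVneq => [-> | _]; rewrite ?ltxx.
rewrite exprS -mulmxE mxE => /lt0r_neq0/eqP/psumr_neq0P[z _ | z /andP[_]].
  by rewrite mulr_ge0.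
rewrite lt_def mulf_eq0 negb_or => /andP[/andP[Pxz Pkzy] _].
by rewrite (@harmonic_edge x z) ?IHk // lt_def ?Pxz ?Pkzy ?P_ge0 ?Pk_ge0.
Qed.

End Harmonic.

Lemma reversible_diagonalizable :
  exists2 V : 'M[C]_m, V \in unitmx & exists d : 'rV[C]_m, V *m P^T = diag_mx d *m V.
Proof.
(* [D P D^-1] with [D = diag (sqrt s)] is real symmetric, hence orthogonally diagonalizable. *)
pose sq x := sqrtC (s x).
have sq_neq0 x : sq x != 0 by rewrite sqrtC_eq0 gt_eqF.
have sqK x : sq x * sq x = s x by rewrite -expr2 sqrtCK.
pose D := diag_mx (\row_x sq x); pose Di := diag_mx (\row_x (sq x)^-1).
have DDi : D *m Di = 1%:M.
  by rewrite mulmx_diag; apply/matrixP => i j; rewrite !mxE; case: eqVneq => // _; rewrite mulfV.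
have DiD : Di *m D = 1%:M.
  by rewrite mulmx_diag; apply/matrixP => i j; rewrite !mxE; case: eqVneq => // _; rewrite mulVf.
pose H := D *m P *m Di.
have HE x y : H x y = sq x * P x y / sq y by rewrite /H mul_mx_diag mxE mul_diag_mx !mxE.
have Pdef : P = Di *m H *m D by rewrite /H !mulmxA DiD mul1mx -mulmxA DiD mulmx1.
clearbody H.
have Hsym : H^T = H.
  apply/matrixP => x y; rewrite mxE !HE.
  apply/(mulIf (sq_neq0 x))/(mulIf (sq_neq0 y)); rewrite !divfK //.
  rewrite -[RHS]mulrA [sq x * sq y]mulrC mulrA divfK //.
  transitivity (s y * P y x); first by rewrite -sqK; ring.
  by rewrite -Pdb -sqK; ring.
have /orthomx_spectralP H_spectral : H \is normalmx.
  apply: symmetric_normalmx.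
    by rewrite is_hermitianmxE expr0 scale1r; apply/eqP/matrixP => i j; rewrite [RHS]mxE /= Hsym.
  apply/mxOverP => x y; rewrite HE; apply: ger0_real.
  by rewrite !mulr_ge0 ?invr_ge0 ?sqrtC_ge0 ?(ltW (s_gt0 _)).
move: H_spectral; set U := spectralmx H; set d := spectral_diag H => H_spectral.
exists (U *m Di); first by rewrite unitmx_mul spectral_unit; case: (mulmx1_unit DiD).
exists d; rewrite [in LHS]Pdef !trmx_mul Hsym !tr_diag_mx H_spectral !mulmxA.
by rewrite -(mulmxA _ Di D) DiD mulmx1 mulmxV ?spectral_unit // mul1mx.
Qed.

Lemma eigsp_row (v : 'rV[C]_m) mu : v *m P^T = mu *: v -> eigsp P mu [ffun x => v 0 x].
Proof.
move=> /rowP Pv; apply/ffunP => x; move: (Pv x); rewrite !ffunE !mxE => <-.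
by apply: eq_bigr => y _; rewrite ffunE mxE mulrC.
Qed.

Lemma eigsp_decomp r (lam : 'I_r.+1 -> C) :
    (forall mu, is_eigenvalue P mu -> exists j, lam j = mu) ->
  forall h : {ffun 'I_m -> C}, exists e : 'I_r.+1 -> {ffun 'I_m -> C},
    (forall j, eigsp P (lam j) (e j)) /\ h = \sum_j e j.
Proof.
move=> lamP h; have [V V_unit [d VP]] := reversible_diagonalizable.
have rowVP k : row k V *m P^T = d 0 k *: row k V.
  by rewrite -row_mul VP mul_diag_mx; apply/rowP => x; rewrite !mxE.
have eig_d k : is_eigenvalue P (d 0 k).
  exists [ffun x => row k V 0 x]; split; last exact: eigsp_row.
  apply/negP => /eqP/ffunP row0.
  have : row k (V *m invmx V) 0 k = 1 by rewrite mulmxV // !mxE eqxx.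
  have rowk0 : row k V = 0 by apply/rowP => x; move: (row0 x); rewrite !ffunE !mxE.
  by rewrite row_mul rowk0 mul0mx mxE => /eqP; rewrite eq_sym oner_eq0.
pose p k := odflt ord0 [pick j | lam j == d 0 k].
have pE k : lam (p k) = d 0 k.
  rewrite /p; case: pickP => [j /eqP // | no_j].
  by have [j lamj] := lamP _ (eig_d k); move: (no_j j); rewrite lamj eqxx.
pose c := (\row_x h x) *m invmx V.
pose e k := [ffun x => (c 0 k *: row k V) 0 x].
exists (fun j => \sum_(k | p k == j) e k); split.
  move=> j; apply: eigsp_sum => k /eqP <-; apply: eigsp_row.
  by rewrite -scalemxAl rowVP pE scalerA mulrC -scalerA.
transitivity (\sum_k e k); last by rewrite (partition_big p xpredT).
apply/ffunP => x.
have := congr1 (fun v : 'rV_m => v 0 x) (mulmx_sum_row c V).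
rewrite mulmxKV // mxE => ->; rewrite summxE sum_ffunE.
by apply: eq_bigr => k _; rewrite ffunE.
Qed.

End Reversible.

Section DffunDistr.
Variables (R : comPzSemiRingType) (I : finType) (T_ : I -> finType).

Lemma bigA_distr_dffun (F : forall i, T_ i -> R) :
  \prod_i \sum_(z : T_ i) F i z = \sum_(x : {dffun forall i, T_ i}) \prod_i F i (x i).
Proof.
symmetry; rewrite (reindex (@dffun_of_fprod _ T_)) /=; last exact/onW_bij/dffun_of_fprod_bij.
transitivity (\sum_(t : fprod T_) \prod_(i in I) [ffun z => F i z] (t i)).
  by apply: eq_bigr => t _; apply: eq_bigr => i _; rewrite !ffunE.
rewrite big_fprod.
rewrite -(bigA_distr_big_dep (tagged_with T_) (fun i => untag 0 [ffun z => F i z])).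
apply: eq_bigr => i _.
transitivity (\sum_(z : T_ i) [ffun z => F i z] z); last by apply: eq_bigr => z _; rewrite ffunE.
exact: (esym (big_tag (fun i (z : T_ i) => [ffun z => F i z] z) i)).
Qed.

Lemma bigA_distr_dffun_neq (i : I) (F : T_ i -> R) (G : forall j, T_ j -> R) :
  \sum_(x : {dffun forall j, T_ j}) F (x i) * \prod_(j | j != i) G j (x j) =
  (\sum_z F z) * \prod_(j | j != i) \sum_z G j z.
Proof.
pose H := dfwith G F.
have H_in : H i = F by rewrite /H dfwith_in.
have H_out j : j != i -> H j = G j by move=> ji; rewrite /H dfwith_out // eq_sym.
transitivity (\sum_(x : {dffun forall j, T_ j}) \prod_j H j (x j)).
  apply: eq_bigr => x _; rewrite [RHS](bigD1 i) //= H_in; congr (_ * _).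
  by apply: eq_bigr => j ji; rewrite H_out.
rewrite -bigA_distr_dffun (bigD1 i) //= H_in; congr (_ * _).
by apply: eq_bigr => j ji; rewrite H_out.
Qed.

Lemma dffun_neq (f g : {dffun forall i, T_ i}) : f != g -> exists i, f i != g i.
Proof.
move=> fg; apply/existsP; rewrite -negb_forall; apply: contra fg => /forallP fg.
by apply/eqP/ffunP => i; apply/eqP/fg.
Qed.

End DffunDistr.

Lemma big_ord_neq_split (R : Type) (idx : R) (op : Monoid.com_law idx) n (i : 'I_n)
    (F : 'I_n -> R) :
  \big[op/idx]_(j | j != i) F j =
  op (\big[op/idx]_(j : 'I_n | (j < i)%N) F j) (\big[op/idx]_(j : 'I_n | (i < j)%N) F j).
Proof.
rewrite (bigID (fun j : 'I_n => (j < i)%N)); congr (op _ _); apply: eq_bigl => j.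
  by rewrite -val_eqE /=; case: ltngtP.
by rewrite -val_eqE /=; case: ltngtP.
Qed.

Lemma sumr_delta (R : pzSemiRingType) (T : finType) (z : T) (h : T -> R) :
  \sum_w (w == z)%:R * h w = h z.
Proof. by under eq_bigr do rewrite mulr_natl mulrb; rewrite -big_mkcond big_pred1_eq. Qed.

Section CrestedTensor.
Variables (C : numClosedFieldType) (n : nat) (m : 'I_n -> nat).
Variables (P : forall i : 'I_n, 'M[C]_(m i)) (g : forall i : 'I_n, {ffun 'I_(m i) -> C}).

Definition avg k (h : {ffun 'I_k -> C}) : C := (\sum_z h z) / k%:R.

(* The [i]-th summand of the crested product applied to [g_1 (x) ... (x) g_n], at [x];
   [avg] is the averaging operator [J]. *)
Definition crested_term (inC : pred 'I_n) (i : 'I_n) (x : prodT m) : C :=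
  mx_act (P i) (g i) (x i) *
  (if inC i then \prod_(j | j != i) g j (x j)
   else \prod_(j : 'I_n | (j < i)%N) g j (x j) * \prod_(j : 'I_n | (i < j)%N) avg (g j)).

Lemma tensor_localC (i : 'I_n) (x : prodT m) :
  \sum_(y : prodT m) (\prod_(j | j != i) ((x j == y j)%:R : C)) * P i (x i) (y i) * tensor g y =
  mx_act (P i) (g i) (x i) * \prod_(j | j != i) g j (x j).
Proof.
transitivity (\sum_(y : prodT m) P i (x i) (y i) * g i (y i) *
                 \prod_(j | j != i) ((y j == x j)%:R * g j (y j))).
  apply: eq_bigr => y _; rewrite ffunE [\prod_j _](bigD1 i) //= big_split /=.
  under [in RHS]eq_bigr do rewrite eq_sym.
  ring.
rewrite (@bigA_distr_dffun_neq _ _ (fun j => 'I_(m j)) i (fun z => P i (x i) z * g i z)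
                               (fun j z => (z == x j)%:R * g j z)) ffunE.
congr (_ * _).
by apply: eq_bigr => j _; exact: sumr_delta.
Qed.

Lemma tensor_localN (i : 'I_n) (x : prodT m) :
  \sum_(y : prodT m) (\prod_(j : 'I_n | (j < i)%N) ((x j == y j)%:R : C)) * P i (x i) (y i)
     / (\prod_(j : 'I_n | (i < j)%N) ((m j)%:R : C)) * tensor g y =
  mx_act (P i) (g i) (x i) *
    (\prod_(j : 'I_n | (j < i)%N) g j (x j) * \prod_(j : 'I_n | (i < j)%N) avg (g j)).
Proof.
pose K j (z : 'I_(m j)) := if (j < i)%N then (z == x j)%:R * g j z else g j z / (m j)%:R.
have K_lt (j : 'I_n) : (j < i)%N -> K j = fun z => (z == x j)%:R * g j z.
  by move=> ji; rewrite /K ji.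
have K_gt (j : 'I_n) : (i < j)%N -> K j = fun z => g j z / (m j)%:R.
  by move=> ij; rewrite /K ltnNge ltnW.
transitivity (\sum_(y : prodT m) P i (x i) (y i) * g i (y i) * \prod_(j | j != i) K j (y j)).
  apply: eq_bigr => y _; rewrite ffunE [\prod_j _](bigD1 i) //= !big_ord_neq_split.
  rewrite (eq_bigr _ (fun j ji => congr1 (@^~ (y j)) (K_lt j ji))).
  rewrite (eq_bigr _ (fun j ij => congr1 (@^~ (y j)) (K_gt j ij))) /=.
  rewrite !big_split prodfV /=; under [in RHS]eq_bigr do rewrite eq_sym.
  ring.
rewrite (@bigA_distr_dffun_neq _ _ (fun j => 'I_(m j)) i (fun z => P i (x i) z * g i z) K).
rewrite ffunE big_ord_neq_split; congr (_ * (_ * _)); apply: eq_bigr => j jI.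
  by rewrite K_lt //; exact: sumr_delta.
by rewrite K_gt // /avg mulr_suml.
Qed.

Lemma crested_act_tensor inC (p0 : 'I_n -> C) x :
  crested_act inC p0 P (tensor g) x = \sum_i p0 i * crested_term inC i x.
Proof.
rewrite ffunE /crested; under eq_bigr do rewrite mulrDl !mulr_suml.
rewrite big_split [RHS](bigID inC) /=; congr (_ + _); rewrite exchange_big;
  apply: eq_bigr => i Ci; rewrite /crested_term ?Ci ?(negbTE Ci).
  by rewrite -tensor_localC mulr_sumr; apply: eq_bigr => y _; rewrite !mulrA.
by rewrite -tensor_localN mulr_sumr; apply: eq_bigr => y _; rewrite !mulrA.
Qed.

End CrestedTensor.

Lemma avg_const (C : numClosedFieldType) k (h : {ffun 'I_k -> C}) z :
  (forall z', h z' = h z) -> avg h = h z.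
Proof.
move=> h_const; rewrite /avg (eq_bigr _ (fun z' _ => h_const z')) sumr_const card_ord.
by rewrite -[h z *+ k]mulr_natr mulfK // pnatr_eq0 -lt0n (leq_ltn_trans _ (ltn_ord z)).
Qed.

Section CrestedEigen.
Variables (C : numClosedFieldType) (n : nat) (m : 'I_n -> nat).
Variables (P : forall i : 'I_n, 'M[C]_(m i)) (inC : pred 'I_n) (p0 : 'I_n -> C).
Variable g : forall i : 'I_n, {ffun 'I_(m i) -> C}.

Lemma crested_termC i t x : inC i -> eigsp (P i) t (g i) ->
  crested_term P g inC i x = t * tensor g x.
Proof. by move=> Ci Pg; rewrite /crested_term Ci Pg !ffunE [\prod_j _](bigD1 i) //= mulrA. Qed.

Lemma crested_termN i t x : ~~ inC i -> eigsp (P i) t (g i) ->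
    (forall j : 'I_n, (i < j)%N -> forall z z', g j z = g j z') ->
  crested_term P g inC i x = t * tensor g x.
Proof.
move=> Ni Pg g_const; rewrite /crested_term (negbTE Ni) Pg !ffunE [\prod_j _](bigD1 i) //=.
rewrite big_ord_neq_split (eq_bigr (fun j => g j (x j)) (P := fun j : 'I_n => (i < j)%N)).
  by rewrite !mulrA.
by move=> j ij; apply: avg_const => z; exact: g_const.
Qed.

Lemma crested_termN_eq0 i (k : 'I_n) x : ~~ inC i -> (i < k)%N -> \sum_z g k z = 0 ->
  crested_term P g inC i x = 0.
Proof.
move=> Ni ik gk0; rewrite /crested_term (negbTE Ni).
by rewrite (bigD1 k (P := fun j : 'I_n => (i < j)%N)) //= /avg gk0 !mul0r !mulr0.
Qed.

Lemma crested_act_tensor_eig (t : 'I_n -> C) :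
    (forall i x, crested_term P g inC i x = t i * tensor g x) ->
  crested_act inC p0 P (tensor g) = fscale (\sum_i p0 i * t i) (tensor g).
Proof.
move=> gt; apply/ffunP => x; rewrite crested_act_tensor [RHS]ffunE mulr_suml.
by apply: eq_bigr => i _; rewrite gt mulrA.
Qed.

End CrestedEigen.

Section TensorSpan.
Variables (C : numClosedFieldType) (n : nat) (m : 'I_n -> nat).
Implicit Types (W : forall i : 'I_n, {ffun 'I_(m i) -> C} -> Prop)
  (g : forall i : 'I_n, {ffun 'I_(m i) -> C}) (f : {ffun prodT m -> C}).

Lemma tensp0 W : tensp W 0.
Proof. by exists 0%N, (fun _ _ => 0); split; [case | rewrite big_ord0]. Qed.

Lemma tenspD W f f' : tensp W f -> tensp W f' -> tensp W (f + f').
Proof.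
move=> [k [g [Wg ->]]] [k' [g' [Wg' ->]]].
exists (k + k')%N, (fun l => match split l with inl a => g a | inr b => g' b end).
split=> [l i | ]; first by case: (split l).
by rewrite big_split_ord; congr (_ + _); apply: eq_bigr => l _;
  rewrite (unsplitK (inl _)) || rewrite (unsplitK (inr _)).
Qed.

Lemma tensp_sum W (I : finType) (Q : pred I) (F : I -> {ffun prodT m -> C}) :
  (forall a, Q a -> tensp W (F a)) -> tensp W (\sum_(a | Q a) F a).
Proof. by apply: big_ind; [exact: tensp0 | exact: tenspD]. Qed.

Lemma tensp_tensor W g : (forall i, W i (g i)) -> tensp W (tensor g).
Proof. by move=> Wg; exists 1%N, (fun _ => g); split; rewrite ?big_ord1. Qed.

Lemma fscale_tensor g (i : 'I_n) c :
  fscale c (tensor g) = tensor (dfwith g (fscale c (g i))).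
Proof.
apply/ffunP => x; rewrite !ffunE [in RHS](bigD1 i) //= dfwith_in ffunE (bigD1 i) //=.
rewrite -mulrA; congr (_ * (_ * _)).
by apply: eq_bigr => j ji; rewrite dfwith_out // eq_sym.
Qed.

Lemma tenspZ W c f : (forall i h, W i h -> W i (fscale c h)) ->
  (0 < n)%N -> tensp W f -> tensp W (fscale c f).
Proof.
move=> WZ n_gt0 [k [g [Wg ->]]]; rewrite fscale_sum; apply: tensp_sum => l _.
rewrite (fscale_tensor _ (Ordinal n_gt0)); apply: tensp_tensor => i.
by case: dfwithP => [|j _]; [exact: WZ | exact: Wg].
Qed.

Lemma crested_act_sum inC (p0 : 'I_n -> C) P (I : finType) (Q : pred I)
    (F : I -> {ffun prodT m -> C}) :
  crested_act inC p0 P (\sum_(l | Q l) F l) = \sum_(l | Q l) crested_act inC p0 P (F l).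
Proof.
apply/ffunP => x; rewrite !ffunE sum_ffunE.
under eq_bigr do rewrite sum_ffunE mulr_sumr.
by rewrite exchange_big; apply: eq_bigr => l _; rewrite ffunE.
Qed.

Lemma tensp_eig W inC (p0 : 'I_n -> C) P mu :
    (forall g, (forall i, W i (g i)) ->
       crested_act inC p0 P (tensor g) = fscale mu (tensor g)) ->
  forall f, tensp W f -> crested_act inC p0 P f = fscale mu f.
Proof.
move=> Wg_eig f [k [g [Wg ->]]]; rewrite crested_act_sum fscale_sum.
by apply: eq_bigr => l _; exact: Wg_eig.
Qed.

Lemma wdot_tensor (sigma : forall i : 'I_n, 'I_(m i) -> C) g g' :
  wdot (fun x : prodT m => \prod_(i : 'I_n) sigma i (x i)) (tensor g) (tensor g') =
  \prod_i wdot (sigma i) (g i) (g' i).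
Proof.
rewrite /wdot (@bigA_distr_dffun _ _ (fun i => 'I_(m i))
                   (fun i z => sigma i z * g i z * (g' i z)^*)).
by apply: eq_bigr => x _; rewrite !ffunE rmorph_prod -!big_split.
Qed.

Lemma tensp_orth (sigma : forall i : 'I_n, 'I_(m i) -> C) W W' (i : 'I_n) f f' :
    (forall h h', W i h -> W' i h' -> wdot (sigma i) h h' = 0) ->
    tensp W f -> tensp W' f' ->
  wdot (fun x : prodT m => \prod_(i : 'I_n) sigma i (x i)) f f' = 0.
Proof.
move=> WW'_orth [k [g [Wg ->]]] [k' [g' [Wg' ->]]].
rewrite wdot_suml big1 // => l _; rewrite wdot_sumr big1 // => l' _.
by rewrite wdot_tensor (bigD1 i) //= WW'_orth ?mul0r.
Qed.

Lemma tensor_sum (r : 'I_n -> nat) (G : forall i : 'I_n, 'I_(r i).+1 -> {ffun 'I_(m i) -> C}) :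
  tensor (fun i => \sum_j G i j) = \sum_(J : choiceT r) tensor (fun i => G i (J i)).
Proof.
apply/ffunP => x; rewrite ffunE sum_ffunE; under eq_bigr do rewrite sum_ffunE.
rewrite (@bigA_distr_dffun _ _ (fun i => 'I_(r i).+1) (fun i j => G i j (x i))).
by apply: eq_bigr => J _; rewrite ffunE.
Qed.

Lemma tensor_delta_expand f :
  f = \sum_(y : prodT m) fscale (f y) (tensor (fun i => [ffun z => (z == y i)%:R])).
Proof.
apply/ffunP => x; rewrite sum_ffunE (bigD1 x) //= big1 => [|y yx].
  by rewrite !ffunE big1 ?mulr1 ?addr0 // => i _; rewrite ffunE eqxx.
have [i yx_i] := dffun_neq yx.
by rewrite !ffunE (bigD1 i) //= ffunE eq_sym (negbTE yx_i) mul0r mulr0.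
Qed.

End TensorSpan.

Lemma ord_gtn_eqF n (i k : 'I_n) : (k < i)%N -> (i == k) = false.
Proof. by move=> ki; rewrite -val_eqE gtn_eqF. Qed.

Section CrestedSpectrum.
Unset Implicit Arguments.
Variables (C : numClosedFieldType) (n : nat) (m : 'I_n -> nat)
  (P : forall i : 'I_n, 'M[C]_(m i)) (sigma : forall i : 'I_n, 'I_(m i) -> C)
  (inC : pred 'I_n) (i1 : 'I_n) (p0 : 'I_n -> C)
  (r : 'I_n -> nat) (lam : forall i : 'I_n, 'I_(r i).+1 -> C).
Hypotheses (P_st : forall i, stochastic (P i)) (P_irr : forall i, irreducible (P i))
  (sigma_pos : forall i, strictly_positive_prob (sigma i))
  (P_db : forall i, detailed_balance (P i) (sigma i))
  (i1_min : forall i, ~~ inC i -> (i1 <= i)%N)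
  (P_sym : forall k : 'I_n, (i1 < k)%N -> (P k)^T = P k)
  (lam_inj : forall i, injective (lam i)) (lam0 : forall i, lam i ord0 = 1)
  (lamP : forall i mu, is_eigenvalue (P i) mu <-> exists j, lam i j = mu).
Let P_ge0 i : forall x y, 0 <= P i x y. Proof. by case: (P_st i). Qed.
Let sigma_gt0 i : forall x, 0 < sigma i x. Proof. by case: (sigma_pos i). Qed.
Set Implicit Arguments.

Lemma Vsp0_const i h : Vsp P lam (ord0 : 'I_(r i).+1) h -> forall z z', h z = h z'.
Proof.
rewrite /Vsp lam0 => Ph.
have Ph1 : mx_act (P i) h = h by rewrite Ph; apply/ffunP => z; rewrite ffunE mul1r.
by apply: (harmonic_const (P_ge0 i) (sigma_gt0 i) (P_db i) _ (P_irr i) Ph1); case: (P_st i).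
Qed.

Lemma Vsp_sum_eq0 (k : 'I_n) (j : 'I_(r k).+1) h : (i1 < k)%N -> j != ord0 ->
  Vsp P lam j h -> \sum_z h z = 0.
Proof.
move=> i1k j0; apply: eigsp_sum_eq0; last by rewrite -(lam0 k) (inj_eq (lam_inj k)).
by move=> y; case: (P_st k) => _ /(_ y) <-; apply: eq_bigr => x _; rewrite -{1}(P_sym k i1k) mxE.
Qed.

Lemma WA_eigen (k : 'I_n) (j : choiceT r) (i : 'I_n) :
  (inC i && (i < k)%N) || (i == k) -> WA P lam inC k j (i := i) = Vsp P lam (j i).
Proof. by rewrite /WA; case/orP => [/andP[-> ->] | /eqP->] //; rewrite ltnn eqxx. Qed.

Lemma WA_gt (k : 'I_n) (j : choiceT r) (i : 'I_n) :
  (k < i)%N -> WA P lam inC k j (i := i) = Vsp P lam (ord0 : 'I_(r i).+1).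
Proof. by move=> ki; rewrite /WA ltnNge ltnW //= ord_gtn_eqF. Qed.

Lemma WB_le (j : choiceT r) (i : 'I_n) : (i <= i1)%N -> WB P lam i1 j (i := i) = Vsp P lam (j i).
Proof. by rewrite /WB => ->. Qed.

Lemma WB_gt (j : choiceT r) (i : 'I_n) :
  (i1 < i)%N -> WB P lam i1 j (i := i) = Vsp P lam (ord0 : 'I_(r i).+1).
Proof. by move=> i1i; rewrite /WB leqNgt i1i. Qed.

Lemma crested_tensorA (k : 'I_n) (j : choiceT r) g : goodA inC i1 k j ->
    (forall i, WA P lam inC k j (g i)) ->
  crested_act inC p0 P (tensor g) = fscale (muA lam inC p0 k j) (tensor g).
Proof.
case/and3P=> i1k jk0 _ Wg.
pose t (i : 'I_n) := if (i < k)%N then (if inC i then lam i (j i) else 0)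
            else if i == k then lam i (j i) else 1.
have -> : muA lam inC p0 k j = \sum_i p0 i * t i.
  rewrite /muA [RHS](bigD1 k) //= big_ord_neq_split /t ltnn eqxx addrCA addrA.
  congr (_ + _ + _); last by apply: eq_bigr => i ki; rewrite ltnNge ltnW //= ord_gtn_eqF ?mulr1.
  rewrite big_mkcond [RHS]big_mkcond; apply: eq_bigr => i _ /=.
  by case: (i < k)%N; case: (inC i); rewrite ?mulr0.
have gk : Vsp P lam (j k) (g k) by have := Wg k; rewrite WA_eigen // eqxx orbT.
have g_gt (i : 'I_n) : (k < i)%N -> forall z z', g i z = g i z'.
  by move=> ki; apply: Vsp0_const; rewrite -(WA_gt j ki).
apply: crested_act_tensor_eig => i x; rewrite /t.
case: (ltngtP i k) => [ik | ki | /val_inj ik]; last first.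
- subst i; rewrite eqxx; case Ck: (inC k); first exact: crested_termC.
  by apply: crested_termN => //; rewrite Ck.
- rewrite ord_gtn_eqF //; have g1 : eigsp (P i) 1 (g i).
    by rewrite -(lam0 i); have := Wg i; rewrite WA_gt.
  case Ci: (inC i); first exact: crested_termC.
  by apply: crested_termN => [|//|i' ii']; [rewrite Ci | apply: g_gt; exact: ltn_trans ii'].
- case Ci: (inC i).
    by apply: crested_termC => //; have := Wg i; rewrite WA_eigen // Ci ik.
  by rewrite (crested_termN_eq0 _ _ (negbT Ci) ik (Vsp_sum_eq0 i1k jk0 gk)) mul0r.
Qed.

Lemma crested_tensorB (j : choiceT r) g : (forall i, WB P lam i1 j (g i)) ->
  crested_act inC p0 P (tensor g) = fscale (muB lam i1 p0 j) (tensor g).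
Proof.
move=> Wg; pose t (i : 'I_n) := if (i <= i1)%N then lam i (j i) else 1.
have -> : muB lam i1 p0 j = \sum_i p0 i * t i.
  rewrite /muB [RHS](bigID (fun i : 'I_n => (i <= i1)%N)) /=; congr (_ + _).
    by apply: eq_bigr => i ii1; rewrite /t ii1.
  by apply: eq_big => [i | i i1i]; rewrite ?ltnNge // /t leqNgt i1i mulr1.
have g_t i : eigsp (P i) (t i) (g i).
  by have := Wg i; rewrite /WB /t; case: (i <= i1)%N; rewrite //= /Vsp lam0.
have g_const (i : 'I_n) : (i1 < i)%N -> forall z z', g i z = g i z'.
  by move=> i1i; apply: Vsp0_const; rewrite -(WB_gt j i1i).
apply: crested_act_tensor_eig => i x; case Ci: (inC i); first exact: crested_termC.
apply: crested_termN => [|//|i' ii']; first by rewrite Ci.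
by apply: g_const; exact: leq_ltn_trans (i1_min i (negbT Ci)) ii'.
Qed.

Lemma crested_eigenA (k : 'I_n) (j : choiceT r) : goodA inC i1 k j ->
  forall f, tensp (WA P lam inC k j) f -> crested_act inC p0 P f = fscale (muA lam inC p0 k j) f.
Proof. by move=> goodkj; apply: tensp_eig => g; exact: crested_tensorA. Qed.

Lemma crested_eigenB (j : choiceT r) :
  forall f, tensp (WB P lam i1 j) f -> crested_act inC p0 P f = fscale (muB lam i1 p0 j) f.
Proof. by apply: tensp_eig => g; exact: crested_tensorB. Qed.

Definition block_space (a : ('I_n * choiceT r) + choiceT r) :
    forall i : 'I_n, {ffun 'I_(m i) -> C} -> Prop :=
  match a with inl kj => WA P lam inC kj.1 kj.2 | inr j => WB P lam i1 j end.

Lemma spAB_block a : spAB P lam inC i1 a = tensp (block_space a).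
Proof. by case: a => [[k j] | j]. Qed.

Definition separated (W W' : forall i : 'I_n, {ffun 'I_(m i) -> C} -> Prop) :=
  exists (i : 'I_n) (ja jb : 'I_(r i).+1), [/\ ja != jb,
    forall h, W i h -> Vsp P lam ja h & forall h, W' i h -> Vsp P lam jb h].

Lemma separated_sym W W' : separated W W' -> separated W' W.
Proof. by case=> i [ja [jb [jab W_a W'_b]]]; exists i, jb, ja; rewrite eq_sym. Qed.

Lemma separated_orth W W' f f' : separated W W' -> tensp W f -> tensp W' f' ->
  wdot (fun x : prodT m => \prod_(i : 'I_n) sigma i (x i)) f f' = 0.
Proof.
case=> i [ja [jb [jab W_a W'_b]]]; apply: tensp_orth => h h' Wh W'h'.
apply: (eigsp_orth (P_ge0 i) (sigma_gt0 i) (P_db i) _ _ (W_a _ Wh) (W'_b _ W'h')).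
  by apply/lamP; exists jb.
by rewrite (inj_eq (lam_inj i)).
Qed.

Lemma goodA_support (k : 'I_n) (j : choiceT r) (i : 'I_n) :
  goodA inC i1 k j -> j i != ord0 -> (inC i && (i < k)%N) || (i == k).
Proof. by case/and3P=> _ _ /forallP/(_ i)/implyP. Qed.

Lemma goodB_support (j : choiceT r) (i : 'I_n) : goodB i1 j -> j i != ord0 -> (i <= i1)%N.
Proof. by move/forallP/(_ i)/implyP. Qed.

Lemma separatedAA (k k' : 'I_n) (j j' : choiceT r) :
    goodA inC i1 k j -> goodA inC i1 k' j' -> (k, j) != (k', j') ->
  separated (WA P lam inC k j) (WA P lam inC k' j').
Proof.
have lt_sep (k1 k2 : 'I_n) (j1 j2 : choiceT r) : (k1 < k2)%N -> goodA inC i1 k2 j2 ->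
    separated (WA P lam inC k1 j1) (WA P lam inC k2 j2).
  move=> k12 /and3P[_ j2k2 _]; exists k2, ord0, (j2 k2).
  by rewrite eq_sym WA_gt // WA_eigen ?eqxx ?orbT.
move=> gA gA'; case: (ltngtP k k') => [kk' _ | k'k _ | /val_inj kk'].
- exact: lt_sep.
- exact/separated_sym/lt_sep.
subst k'; rewrite xpair_eqE eqxx => /dffun_neq[i jj'_i].
have supp_i : (inC i && (i < k)%N) || (i == k).
  have [j'0 | j0] := eqVneq (j i) ord0; last exact: goodA_support gA j0.
  by apply: goodA_support gA' _; rewrite -j'0 eq_sym.
by exists i, (j i), (j' i); rewrite !WA_eigen.
Qed.

Lemma separatedAB (k : 'I_n) (j j' : choiceT r) : goodA inC i1 k j ->
  separated (WA P lam inC k j) (WB P lam i1 j').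
Proof.
case/and3P=> i1k jk0 _; exists k, (j k), ord0.
by rewrite WB_gt // WA_eigen ?eqxx ?orbT.
Qed.

Lemma separatedBB (j j' : choiceT r) : goodB i1 j -> goodB i1 j' -> j != j' ->
  separated (WB P lam i1 j) (WB P lam i1 j').
Proof.
move=> gB gB' /dffun_neq[i jj'_i].
have supp_i : (i <= i1)%N.
  have [j'0 | j0] := eqVneq (j i) ord0; last exact: goodB_support gB j0.
  by apply: goodB_support gB' _; rewrite -j'0 eq_sym.
by exists i, (j i), (j' i); rewrite !WB_le.
Qed.

Lemma separated_blocks a b : goodAB inC i1 a -> goodAB inC i1 b -> a != b ->
  separated (block_space a) (block_space b).
Proof.
case: a => [[k j] | j]; case: b => [[k' j'] | j'] /= ga gb ab.
- exact: separatedAA.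
- exact: separatedAB.
- exact/separated_sym/separatedAB.
- exact: separatedBB.
Qed.

Lemma dirsum_blocks_uniq (g : ('I_n * choiceT r) + choiceT r -> {ffun prodT m -> C}) :
    (forall a, goodAB inC i1 a -> spAB P lam inC i1 a (g a)) ->
    \sum_(a | goodAB inC i1 a) g a = 0 ->
  forall a, goodAB inC i1 a -> g a = 0.
Proof.
move=> g_in g_sum0 b gb; apply: (wdot_eq0 (w := fun x : prodT m => \prod_i sigma i (x i))).
  by move=> x; apply: prodr_gt0 => i _; exact: sigma_gt0.
have : wdot (fun x : prodT m => \prod_i sigma i (x i)) (\sum_(a | goodAB inC i1 a) g a) (g b) = 0.
  by rewrite g_sum0 /wdot big1 // => x _; rewrite ffunE mulr0 mul0r.
rewrite wdot_suml (bigD1 b) //= big1 ?addr0 // => a /andP[ga ab].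
by apply: (separated_orth (separated_blocks ga gb ab)); rewrite -spAB_block; exact: g_in.
Qed.

(* The summand containing [V^1_{J_1} (x) ... (x) V^n_{J_n}]: for the largest [k > i1]
   with [J_k != 0], the (a)-space of [k] (indices [J_i], [i < k], [i] in [N], are dropped
   since those factors range over all of [L(X_i)]); if there is none, the (b)-space of [J]. *)
Definition top_index (J : choiceT r) : option 'I_n :=
  [pick k : 'I_n | [&& (i1 < k)%N, J k != ord0 & [forall i : 'I_n, (k < i)%N ==> (J i == ord0)]]].

Definition zeroN (k : 'I_n) (J : choiceT r) : choiceT r :=
  [ffun i : 'I_n => if ~~ inC i && (i < k)%N then (ord0 : 'I_(r i).+1) else J i].

Definition block_of (J : choiceT r) : ('I_n * choiceT r) + choiceT r :=
  if top_index J is Some k then inl (k, zeroN k J) else inr J.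

Lemma no_top_goodB (J : choiceT r) : top_index J = None -> goodB i1 J.
Proof.
move=> no_top; apply/forallP => i0; apply/implyP => Ji0; rewrite leqNgt; apply/negP => i1i0.
have [k /andP[i1k Jk] k_max] := @arg_maxnP _ i0 (fun k : 'I_n => (i1 < k)%N && (J k != ord0))
  (fun k : 'I_n => nat_of_ord k) (introT andP (conj i1i0 Ji0)).
move: no_top; rewrite /top_index; case: pickP => // no_k _.
have := no_k k; rewrite /= i1k Jk /= => /negbT/negP; apply.
apply/forallP => i; apply/implyP => ki.
apply: contraLR ki => Ji; rewrite -leqNgt.
have [ii1 | i1i] := leqP i i1; first exact: ltnW (leq_ltn_trans ii1 i1k).
by apply: k_max; rewrite i1i Ji.
Qed.

Lemma block_ofP (J : choiceT r) : goodAB inC i1 (block_of J) /\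
  forall (i : 'I_n) h, Vsp P lam (J i) h -> block_space (block_of J) h.
Proof.
rewrite /block_of; case top: (top_index J) => [k |]; last first.
  have gB := no_top_goodB top; split=> // i h Jh /=.
  have [ii1 | i1i] := leqP i i1; first by rewrite WB_le.
  rewrite WB_gt //; have [J0 | Jn0] := eqVneq (J i) ord0; first by rewrite -J0.
  by move: (goodB_support gB Jn0); rewrite leqNgt i1i.
move: top; rewrite /top_index; case: pickP => // k' /and3P[i1k Jk /forallP k_top] [<-].
have J_gt (i : 'I_n) : (k' < i)%N -> J i = ord0 by move=> ki; apply/eqP/(implyP (k_top i)).
split.
  apply/and3P; split=> //; first by rewrite ffunE ltnn andbF.
  apply/forallP => i; rewrite ffunE; apply/implyP.
  case: (ltngtP i k') => [ik | ki | /val_inj->] /=; rewrite ?andbT ?andbF ?eqxx ?orbT //.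
    by case: (inC i); rewrite ?eqxx.
  by rewrite J_gt ?eqxx.
move=> i h Jh /=; case: (ltngtP i k') => [ik | ki | /val_inj ik].
- by rewrite /WA ik ffunE ik andbT; case: (inC i).
- by rewrite WA_gt // -(J_gt i ki).
- by subst i; rewrite WA_eigen ?eqxx ?orbT // ffunE ltnn andbF.
Qed.

Lemma block_spaceZ a (i : 'I_n) c h : block_space a h -> block_space a (i := i) (fscale c h).
Proof.
by case: a => [[k j] | j]; rewrite /= /WA /WB /Vsp; repeat case: ifP => _; try exact: eigspZ.
Qed.

Lemma dirsum_blocks_exist f : exists g : ('I_n * choiceT r) + choiceT r -> {ffun prodT m -> C},
  (forall a, goodAB inC i1 a -> spAB P lam inC i1 a (g a)) /\ f = \sum_(a | goodAB inC i1 a) g a.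
Proof.
have E_ex i : exists Ei : forall z : 'I_(m i), 'I_(r i).+1 -> {ffun 'I_(m i) -> C},
    forall z, (forall j, Vsp P lam j (Ei z j)) /\ [ffun w => (w == z)%:R] = \sum_j Ei z j.
  exact: fin_all_exists (fun z => eigsp_decomp (P_ge0 i) (sigma_gt0 i) (P_db i)
    (fun mu => proj1 (lamP i mu)) [ffun w => (w == z)%:R]).
have [E E_eig] := fin_all_exists E_ex.
pose T y (J : choiceT r) := tensor (fun i => E i (y i) (J i)).
exists (fun a => \sum_(J | block_of J == a) \sum_(y : prodT m) fscale (f y) (T y J)); split.
  move=> a _; rewrite spAB_block; apply: tensp_sum => J /eqP <-; apply: tensp_sum => y _.
  apply: tenspZ => [i h Wh | | ]; first exact: block_spaceZ.
    exact: leq_ltn_trans (ltn_ord i1).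
  by apply: tensp_tensor => i; apply: (proj2 (block_ofP J)); case: (E_eig i (y i)).
transitivity (\sum_(J : choiceT r) \sum_(y : prodT m) fscale (f y) (T y J)).
  rewrite exchange_big {1}[f]tensor_delta_expand; apply: eq_bigr => y _; rewrite -fscale_sum.
  rewrite /T -(tensor_sum (fun i => E i (y i))); congr fscale; apply/ffunP => x.
  by rewrite !ffunE; apply: eq_bigr => i _; case: (E_eig i (y i)) => _ ->.
by rewrite (partition_big _ _ (fun J _ => proj1 (block_ofP J))).
Qed.

End CrestedSpectrum.

Theorem theorem4p3 (C : numClosedFieldType) (n : nat) (m : 'I_n -> nat)
    (P : forall i : 'I_n, 'M[C]_(m i)) (sigma : forall i : 'I_n, 'I_(m i) -> C)
    (inC : pred 'I_n) (i1 : 'I_n) (p0 : 'I_n -> C)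
    (r : 'I_n -> nat) (lam : forall i : 'I_n, 'I_(r i).+1 -> C) :
  (forall i, stochastic (P i)) ->
  (forall i, irreducible (P i)) ->
  (forall i, strictly_positive_prob (sigma i)) ->
  (forall i, detailed_balance (P i) (sigma i)) ->
  ~~ inC i1 -> (forall i, ~~ inC i -> (i1 <= i)%N) ->
  (forall i, 0 < p0 i) -> \sum_i p0 i = 1 ->
  (forall k : 'I_n, (i1 < k)%N -> (P k)^T = P k) ->
  (forall i, injective (lam i)) ->
  (forall i, lam i ord0 = 1) ->
  (forall i mu, is_eigenvalue (P i) mu <-> exists j, lam i j = mu) ->
  (forall (k : 'I_n) (j : choiceT r), goodA inC i1 k j ->
     forall f, tensp (WA P lam inC k j) f ->
       crested_act inC p0 P f = fscale (muA lam inC p0 k j) f)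
  /\ (forall j : choiceT r, goodB i1 j ->
     forall f, tensp (WB P lam i1 j) f ->
       crested_act inC p0 P f = fscale (muB lam i1 p0 j) f)
  /\ dirsum (goodAB inC i1) (spAB P lam inC i1).
Proof.
move=> P_st P_irr sigma_pos P_db _ i1_min _ _ P_sym lam_inj lam0 lamP.
split; first exact: (crested_eigenA p0 P_st P_irr sigma_pos P_db P_sym lam_inj lam0).
split; first by move=> j _; exact: (crested_eigenB p0 P_st P_irr sigma_pos P_db i1_min lam0).
split; first exact: (dirsum_blocks_exist inC i1 P_st sigma_pos P_db lamP).
exact: (dirsum_blocks_uniq P_st sigma_pos P_db lam_inj lamP).
Qed.
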